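(* Let $X$ be a metric space and $K$ a finite simplicial complex, realized in a simplex in some $\mathbb{R}^N$ and equipped with the induced metric. Then every uniformly continuous map $f:X\to K$ is a uniform limit of Lipschitz maps $g_k:X\to K$. *)

From Stdlib Require Import Reals List.
Import ListNotations.
Open Scope R_scope.

Fixpoint rsum (n : nat) (f : nat -> R) : R :=
  match n with
  | O => 0
  | S k => rsum k f + f k
  end.

(* Points of R^N are represented by functions nat -> R whose coordinates
   of index >= N vanish (see [in_realization]); Euclidean distance. *)
Definition edist (N : nat) (x y : nat -> R) : R :=
  sqrt (rsum N (fun i => (x i - y i) ^ 2)).

(* The vertices V 0, ..., V m (V j i = i-th coordinate of vertex j)
   are affinely independent in R^N, i.e. span an m-simplex. *)
Definition affinely_independent (N m : nat) (V : nat -> nat -> R) : Prop :=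
  forall c : nat -> R,
    rsum (S m) c = 0 ->
    (forall i, (i < N)%nat -> rsum (S m) (fun j => c j * V j i) = 0) ->
    forall j, (j <= m)%nat -> c j = 0.

Definition simplicial_complex (m : nat) (F : list (list nat)) : Prop :=
  (forall s, In s F -> s <> [] /\ forall j, In j s -> (j <= m)%nat) /\
  (forall s t, In s F -> t <> [] -> incl t s ->
     exists t', In t' F /\ forall j, In j t <-> In j t').

(* x lies in the geometric realization |K| of the subcomplex F of the
   simplex with vertices V 0 .. V m in R^N: x is a convex combination of
   the vertices whose support is contained in some face of F. *)
Definition in_realization (N m : nat) (V : nat -> nat -> R)
    (F : list (list nat)) (x : nat -> R) : Prop :=
  (forall i, (N <= i)%nat -> x i = 0) /\
  exists t : nat -> R,
    (forall j, (j <= m)%nat -> 0 <= t j) /\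
    rsum (S m) t = 1 /\
    (forall i, (i < N)%nat -> x i = rsum (S m) (fun j => t j * V j i)) /\
    exists s, In s F /\ forall j, (j <= m)%nat -> t j <> 0 -> In j s.

Definition uniformly_continuous_into (X : Metric_Space) (N : nat)
    (f : Base X -> nat -> R) : Prop :=
  forall eps, 0 < eps -> exists delta, 0 < delta /\
    forall x y, dist X x y < delta -> edist N (f x) (f y) < eps.

Definition lipschitz_into (X : Metric_Space) (N : nat)
    (g : Base X -> nat -> R) : Prop :=
  exists L, forall x y, edist N (g x) (g y) <= L * dist X x y.

Definition uniform_limit (X : Metric_Space) (N : nat)
    (g : nat -> Base X -> nat -> R) (f : Base X -> nat -> R) : Prop :=
  forall eps, 0 < eps -> exists k0, forall k, (k0 <= k)%nat ->
    forall x, edist N (g k x) (f x) < eps.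

(* Write f = sum_j t_j V_j with barycentric coordinates t_j : X -> [0, 1].
   1. Affine independence makes the barycentric map injective, hence it has a
      linear left inverse; so each t_j is Lipschitz in f, and therefore
      uniformly continuous on X.
   2. Each t_j is approximated from below by its inf-convolution
      h_j(x) = inf_y (t_j y + L d(x, y)), which is L-Lipschitz and satisfies
      t_j - e <= h_j <= t_j as soon as L delta >= 1, where delta is a modulus
      of uniform continuity of the t_j for the error e.
   3. Since 0 <= h_j <= t_j, the weights h(x) are supported in the face that
      carries f(x), and sum_j h_j >= 1/2 for L large.  Hence
      g = sum_j (h_j / sum_k h_k) V_j is a Lipschitz map into |K|, and its
      barycentric coordinates are within 2 (m + 1) e of those of f. *)
From Stdlib Require Import Reals List Lra Lia ClassicalEpsilon.
From mathcomp Require all_boot all_algebra Rstruct.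
Open Scope R_scope.

Lemma rsum_ext n f g :
  (forall i, (i < n)%nat -> f i = g i) -> rsum n f = rsum n g.
Proof.
  induction n; simpl; intros H; [reflexivity|].
  rewrite IHn by (intros; apply H; lia). rewrite H by lia. reflexivity.
Qed.

Lemma rsum_minus n f g : rsum n (fun i => f i - g i) = rsum n f - rsum n g.
Proof. induction n; simpl; [ring|]. rewrite IHn; ring. Qed.

Lemma rsum_scal_l n c f : rsum n (fun i => c * f i) = c * rsum n f.
Proof. induction n; simpl; [ring|]. rewrite IHn; ring. Qed.

Lemma rsum_scal_r n c f : rsum n (fun i => f i * c) = rsum n f * c.
Proof. induction n; simpl; [ring|]. rewrite IHn; ring. Qed.

Lemma rsum_const n c : rsum n (fun _ => c) = INR n * c.
Proof. induction n; simpl rsum; [simpl; ring|]. rewrite IHn, S_INR; ring. Qed.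

Lemma rsum_abs n f : Rabs (rsum n f) <= rsum n (fun i => Rabs (f i)).
Proof.
  induction n; simpl; [rewrite Rabs_R0; lra|].
  eapply Rle_trans; [apply Rabs_triang|]. lra.
Qed.

Lemma rsum_le n f g :
  (forall i, (i < n)%nat -> f i <= g i) -> rsum n f <= rsum n g.
Proof.
  induction n; simpl; intros H; [lra|].
  assert (rsum n f <= rsum n g) by (apply IHn; intros; apply H; lia).
  assert (f n <= g n) by (apply H; lia). lra.
Qed.

Lemma rsum_nonneg n f : (forall i, (i < n)%nat -> 0 <= f i) -> 0 <= rsum n f.
Proof.
  induction n; simpl; intros H; [lra|].
  assert (0 <= rsum n f) by (apply IHn; intros; apply H; lia).
  assert (0 <= f n) by (apply H; lia). lra.
Qed.

Lemma rsum_ge_term n f j :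
  (forall i, (i < n)%nat -> 0 <= f i) -> (j < n)%nat -> f j <= rsum n f.
Proof.
  induction n; intros H Hj; [lia|]. simpl.
  assert (0 <= rsum n f) by (apply rsum_nonneg; intros; apply H; lia).
  destruct (Nat.eq_dec j n) as [->|Hne]; [lra|].
  assert (f j <= rsum n f) by (apply IHn; [intros; apply H; lia|lia]).
  assert (0 <= f n) by (apply H; lia). lra.
Qed.

Lemma sqrt_add_sq S a : 0 <= S -> sqrt (S + a ^ 2) <= sqrt S + Rabs a.
Proof.
  intros HS. pose proof (sqrt_pos S); pose proof (Rabs_pos a).
  rewrite <- (sqrt_square (sqrt S + Rabs a)) by lra.
  apply sqrt_le_1_alt.
  assert (sqrt S * sqrt S = S) by (apply sqrt_sqrt; lra).
  assert (Rabs a * Rabs a = a ^ 2)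
    by (rewrite <- Rabs_mult, Rabs_right by nra; ring).
  assert (0 <= sqrt S * Rabs a) by (apply Rmult_le_pos; auto).
  replace ((sqrt S + Rabs a) * (sqrt S + Rabs a))
    with (sqrt S * sqrt S + Rabs a * Rabs a + 2 * (sqrt S * Rabs a)) by ring.
  lra.
Qed.

Lemma edist_nonneg N x y : 0 <= edist N x y.
Proof. apply sqrt_pos. Qed.

Lemma edist_le_l1 N x y : edist N x y <= rsum N (fun i => Rabs (x i - y i)).
Proof.
  unfold edist. induction N; cbn [rsum]; [rewrite sqrt_0; lra|].
  assert (0 <= rsum N (fun i => (x i - y i) ^ 2))
    by (apply rsum_nonneg; intros; apply pow2_ge_0).
  eapply Rle_trans; [apply sqrt_add_sq; assumption|lra].
Qed.

Lemma coord_le_edist N x y i : (i < N)%nat -> Rabs (x i - y i) <= edist N x y.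
Proof.
  intros Hi. unfold edist. rewrite <- sqrt_Rsqr_abs. apply sqrt_le_1_alt.
  unfold Rsqr. replace ((x i - y i) * (x i - y i)) with ((x i - y i) ^ 2) by ring.
  apply (rsum_ge_term N (fun k => (x k - y k) ^ 2) i); auto.
  intros; apply pow2_ge_0.
Qed.

(** * Lipschitz real-valued functions on a metric space *)

Section LipschitzFunctions.
Variable X : Metric_Space.

Definition lipschitz_real (a : Base X -> R) : Prop :=
  exists L, forall x y, Rabs (a x - a y) <= L * dist X x y.

Lemma dist_nonneg x y : 0 <= dist X x y.
Proof. pose proof (dist_pos X x y); lra. Qed.

Lemma lipschitz_real_nonneg a : lipschitz_real a ->
  exists L, 0 <= L /\ forall x y, Rabs (a x - a y) <= L * dist X x y.
Proof.
  intros [L H]. exists (Rmax L 0). split; [apply Rmax_r|]. intros x y.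
  eapply Rle_trans; [apply H|].
  apply Rmult_le_compat_r; [apply dist_nonneg|apply Rmax_l].
Qed.

Lemma lipschitz_real_ext a b :
  lipschitz_real a -> (forall x, a x = b x) -> lipschitz_real b.
Proof. intros [L H] E. exists L. intros; rewrite <- !E; auto. Qed.

Lemma lipschitz_real_const c : lipschitz_real (fun _ => c).
Proof. exists 0. intros. replace (c - c) with 0 by ring. rewrite Rabs_R0; lra. Qed.

Lemma lipschitz_real_plus a b :
  lipschitz_real a -> lipschitz_real b -> lipschitz_real (fun x => a x + b x).
Proof.
  intros [La Ha] [Lb Hb]. exists (La + Lb). intros x y.
  replace (a x + b x - (a y + b y)) with ((a x - a y) + (b x - b y)) by ring.
  eapply Rle_trans; [apply Rabs_triang|].
  specialize (Ha x y); specialize (Hb x y). lra.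
Qed.

Lemma lipschitz_real_scal c a :
  lipschitz_real a -> lipschitz_real (fun x => c * a x).
Proof.
  intros [La Ha]. exists (Rabs c * La). intros x y.
  replace (c * a x - c * a y) with (c * (a x - a y)) by ring.
  rewrite Rabs_mult, Rmult_assoc.
  apply Rmult_le_compat_l; [apply Rabs_pos|apply Ha].
Qed.

Lemma lipschitz_real_rsum n (a : nat -> Base X -> R) :
  (forall j, (j < n)%nat -> lipschitz_real (a j)) ->
  lipschitz_real (fun x => rsum n (fun j => a j x)).
Proof.
  induction n; intros H; simpl; [apply lipschitz_real_const|].
  apply lipschitz_real_plus; [apply IHn; intros; apply H; lia|apply H; lia].
Qed.

Lemma lipschitz_real_mult a b A B :
  lipschitz_real a -> lipschitz_real b ->
  (forall x, Rabs (a x) <= A) -> (forall x, Rabs (b x) <= B) ->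
  lipschitz_real (fun x => a x * b x).
Proof.
  intros Ha Hb HA HB.
  apply lipschitz_real_nonneg in Ha as [La [La0 Ha]].
  apply lipschitz_real_nonneg in Hb as [Lb [Lb0 Hb]].
  exists (A * Lb + B * La). intros x y.
  replace (a x * b x - a y * b y) with (a x * (b x - b y) + b y * (a x - a y))
    by ring.
  eapply Rle_trans; [apply Rabs_triang|]. rewrite !Rabs_mult.
  pose proof (dist_nonneg x y).
  assert (Rabs (a x) * Rabs (b x - b y) <= A * (Lb * dist X x y))
    by (apply Rmult_le_compat; auto using Rabs_pos).
  assert (Rabs (b y) * Rabs (a x - a y) <= B * (La * dist X x y))
    by (apply Rmult_le_compat; auto using Rabs_pos).
  nra.
Qed.

Lemma lipschitz_real_inv b beta :
  lipschitz_real b -> 0 < beta -> (forall x, beta <= b x) ->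
  lipschitz_real (fun x => / b x).
Proof.
  intros Hb Hbeta Hge. apply lipschitz_real_nonneg in Hb as [Lb [Lb0 Hb]].
  exists (Lb / (beta * beta)). intros x y.
  pose proof (Hge x); pose proof (Hge y).
  replace (/ b x - / b y) with ((b y - b x) / (b x * b y)) by (field; lra).
  unfold Rdiv. rewrite Rabs_mult, Rabs_inv, (Rabs_right (b x * b y)) by nra.
  rewrite Rabs_minus_sym.
  assert (/ (b x * b y) <= / (beta * beta)) by (apply Rinv_le_contravar; nra).
  assert (0 <= / (b x * b y)) by (left; apply Rinv_0_lt_compat; nra).
  specialize (Hb x y). pose proof (Rabs_pos (b x - b y)).
  pose proof (dist_nonneg x y).
  assert (Rabs (b x - b y) * / (b x * b y) <= Lb * dist X x y * / (beta * beta))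
    by (apply Rmult_le_compat; auto).
  lra.
Qed.

(* A map into R^N whose first N coordinates are Lipschitz is Lipschitz for
   the Euclidean distance (already for the larger l1 distance). *)
Lemma lipschitz_of_coords N (g : Base X -> nat -> R) :
  (forall i, (i < N)%nat -> lipschitz_real (fun x => g x i)) ->
  lipschitz_into X N g.
Proof.
  intros H.
  assert (Hl1 : exists L, forall x y,
             rsum N (fun i => Rabs (g x i - g y i)) <= L * dist X x y).
  { induction N as [|N IH]; [exists 0; intros; simpl; lra|].
    destruct IH as [L1 H1]; [intros; apply H; lia|].
    destruct (H N ltac:(lia)) as [L2 H2]. exists (L1 + L2). intros x y; simpl.
    specialize (H1 x y); specialize (H2 x y). lra. }
  destruct Hl1 as [L HL]. exists L. intros x y.
  eapply Rle_trans; [apply edist_le_l1|apply HL].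
Qed.

End LipschitzFunctions.

(** * Inf-convolution: Lipschitz approximation from below *)

Section InfConvolution.
Variables (X : Metric_Space) (u : Base X -> R) (L : R).

(* The set of the -(|u y| + |L| d(x, y)); its supremum is minus the
   inf-convolution of u at x.  The absolute values make the infimum exist for
   every u and L; the inf-convolution is used for u >= 0 and L >= 0 only. *)
Definition infconv_values (x : Base X) (z : R) : Prop :=
  exists y, z = - (Rabs (u y) + Rabs L * dist X x y).

Lemma infconv_values_bound x : bound (infconv_values x).
Proof.
  exists 0. intros z [y ->].
  pose proof (Rabs_pos (u y)). pose proof (Rabs_pos L).
  pose proof (Rmult_le_pos _ _ (Rabs_pos L) (dist_nonneg X x y)). lra.
Qed.

Lemma infconv_values_inhabited x : exists z, infconv_values x z.
Proof. eexists. exists x. reflexivity. Qed.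

Definition infconv (x : Base X) : R :=
  - proj1_sig (completeness _ (infconv_values_bound x)
                 (infconv_values_inhabited x)).

Lemma infconv_le x y : infconv x <= Rabs (u y) + Rabs L * dist X x y.
Proof.
  unfold infconv.
  destruct (completeness _ (infconv_values_bound x)
              (infconv_values_inhabited x)) as [s Hs]; simpl.
  destruct Hs as [Hub _].
  assert (Hy : infconv_values x (- (Rabs (u y) + Rabs L * dist X x y)))
    by (exists y; reflexivity).
  specialize (Hub _ Hy). lra.
Qed.

Lemma infconv_ge x b :
  (forall y, b <= Rabs (u y) + Rabs L * dist X x y) -> b <= infconv x.
Proof.
  intros H. unfold infconv.
  destruct (completeness _ (infconv_values_bound x)
              (infconv_values_inhabited x)) as [s Hs]; simpl.
  destruct Hs as [_ Hlub].
  assert (s <= - b) by (apply Hlub; intros z [y ->]; specialize (H y); lra).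
  lra.
Qed.

Lemma infconv_nonneg x : 0 <= infconv x.
Proof.
  apply infconv_ge. intros y. pose proof (Rabs_pos (u y)).
  pose proof (Rmult_le_pos _ _ (Rabs_pos L) (dist_nonneg X x y)). lra.
Qed.

Lemma infconv_le_self x : infconv x <= Rabs (u x).
Proof.
  eapply Rle_trans; [apply (infconv_le x x)|].
  rewrite (proj2 (dist_refl X x x) eq_refl). lra.
Qed.

(* As an infimum of |L|-Lipschitz functions, infconv is |L|-Lipschitz. *)
Lemma infconv_lipschitz : lipschitz_real X infconv.
Proof.
  exists (Rabs L).
  assert (H : forall x x', infconv x - infconv x' <= Rabs L * dist X x x').
  { intros x x'.
    enough (infconv x - Rabs L * dist X x x' <= infconv x') by lra.
    apply infconv_ge. intros y.
    pose proof (infconv_le x y). pose proof (dist_tri X x y x').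
    assert (Rabs L * dist X x y <= Rabs L * (dist X x x' + dist X x' y))
      by (apply Rmult_le_compat_l; [apply Rabs_pos|assumption]).
    lra. }
  intros x y. apply Rabs_le.
  pose proof (H x y). pose proof (H y x) as Hyx. rewrite dist_sym in Hyx. lra.
Qed.

Lemma infconv_close delta e :
  (forall x, 0 <= u x <= 1) -> 0 < delta ->
  (forall x y, dist X x y < delta -> Rabs (u x - u y) <= e) ->
  1 <= L * delta ->
  forall x, u x - e <= infconv x.
Proof.
  intros Hu Hd Hc HL x.
  assert (He : 0 <= e).
  { eapply Rle_trans; [apply Rabs_pos|apply (Hc x x)].
    rewrite (proj2 (dist_refl X x x) eq_refl). lra. }
  assert (HL0 : 0 < L) by (destruct (Rle_or_lt L 0); [nra|auto]).
  apply infconv_ge. intros y.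
  rewrite (Rabs_right L), (Rabs_right (u y)) by (pose proof (Hu y); lra).
  pose proof (Hu x); pose proof (Hu y). pose proof (dist_nonneg X x y).
  destruct (Rlt_or_le (dist X x y) delta) as [Hlt|Hge].
  - specialize (Hc x y Hlt). pose proof (Rle_abs (u x - u y)).
    pose proof (Rmult_le_pos L (dist X x y) ltac:(lra) ltac:(lra)). lra.
  - assert (L * delta <= L * dist X x y) by (apply Rmult_le_compat_l; lra).
    lra.
Qed.

End InfConvolution.

(** * Barycentric coordinates *)

Module LinearLeftInverse.
Import all_boot all_algebra Rstruct GRing.Theory.

Lemma rsum_big n f : rsum n f = (\sum_(i < n) f i)%R.
Proof.
elim: n => [|n IH] /=; first by rewrite big_ord0.
by rewrite big_ord_recr /= IH RplusE.
Qed.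

Lemma left_inverse_of_injective (D n : nat) (W : nat -> nat -> R) :
  (forall c : nat -> R,
     (forall i, Peano.lt i D -> rsum n (fun k => c k * W k i) = 0) ->
     forall j, Peano.lt j n -> c j = 0) ->
  exists B : nat -> nat -> R, forall (c : nat -> R) j, Peano.lt j n ->
    c j = rsum D (fun i => rsum n (fun k => c k * W k i) * B i j).
Proof.
case: n => [|n] Hinj; first by exists (fun _ _ => 0) => c j /ltP.
case: D Hinj => [|D] Hinj.
  exfalso; apply: R1_neq_R0.
  by apply: (Hinj (fun _ => 1) _ 0%N); [move=> i /ltP | apply/ltP].
pose A : 'M[R]_(n.+1, D.+1) := (\matrix_(k, i) W k i)%R.
have : row_free A.
  apply: inj_row_free => v Hv; apply/rowP => j; rewrite !mxE.
  have := Hinj (fun k => v ord0 (inord k)) _ j (ltP (ltn_ord j)).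
  rewrite inord_val => -> // i /ltP Hi.
  rewrite rsum_big.
  transitivity ((v *m A)%R ord0 (inord i)); last by rewrite Hv mxE.
  rewrite mxE; apply: eq_bigr => k _.
  by rewrite inord_val mxE inordK // RmultE.
case/row_freeP => B0 HB.
exists (fun i j => B0 (inord i) (inord j)) => c j /ltP Hj.
pose v : 'rV[R]_(n.+1) := (\row_k c k)%R.
have Hv : v = (v *m A *m B0)%R by rewrite -mulmxA HB mulmx1.
have := congr1 (fun M : 'rV_(n.+1) => M ord0 (inord j)) Hv.
cbv beta; rewrite {1}/v mxE inordK // => ->.
rewrite rsum_big mxE; apply: eq_bigr => i _.
rewrite rsum_big mxE inord_val RmultE; congr (_ * _)%R.
by apply: eq_bigr => k _; rewrite !mxE RmultE.
Qed.
End LinearLeftInverse.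

Definition bary_point (N m : nat) (V : nat -> nat -> R) (w : nat -> R) :
    nat -> R :=
  fun i => if Nat.ltb i N then rsum (S m) (fun j => w j * V j i) else 0.

(* Barycentric coordinates of points of the simplex are Lipschitz functions
   of the points: affine independence makes the barycentric map injective. *)
Lemma barycentric_coords_lipschitz N m V :
  affinely_independent N m V ->
  exists C, 0 <= C /\ forall (w w' p p' : nat -> R),
    rsum (S m) w = 1 -> rsum (S m) w' = 1 ->
    (forall i, (i < N)%nat -> p i = rsum (S m) (fun j => w j * V j i)) ->
    (forall i, (i < N)%nat -> p' i = rsum (S m) (fun j => w' j * V j i)) ->
    forall j, (j <= m)%nat -> Rabs (w j - w' j) <= C * edist N p p'.
Proof.
  intros hV.
  (* Homogenize: the vertex (V j, 1) in R^(N+1) makes the map linear. *)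
  set (W := fun k i => if Nat.ltb i N then V k i else 1).
  destruct (LinearLeftInverse.left_inverse_of_injective (S N) (S m) W)
    as [B HB].
  { intros c Hc j Hj. apply hV; [| |lia].
    - rewrite <- (Hc N ltac:(lia)). apply rsum_ext. intros k _. unfold W.
      rewrite Nat.ltb_irrefl. ring.
    - intros i Hi. rewrite <- (Hc i ltac:(lia)). apply rsum_ext. intros k _.
      unfold W. destruct (Nat.ltb_spec i N); [reflexivity|lia]. }
  set (C := rsum (S m) (fun j => rsum N (fun i => Rabs (B i j)))).
  exists C. split.
  { apply rsum_nonneg; intros; apply rsum_nonneg; intros; apply Rabs_pos. }
  intros w w' p p' Hw Hw' Hp Hp' j Hj.
  rewrite (HB (fun k => w k - w' k) j ltac:(lia)).
  change (rsum (S N) ?g) with (rsum N g + g N). cbv beta.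
  assert (Hlast : rsum (S m) (fun k => (w k - w' k) * W k N) = 0).
  { rewrite (rsum_ext _ _ (fun k => w k - w' k)).
    - rewrite rsum_minus, Hw, Hw'; ring.
    - intros k _. unfold W. rewrite Nat.ltb_irrefl. ring. }
  rewrite Hlast, Rmult_0_l, Rplus_0_r.
  eapply Rle_trans; [apply rsum_abs|].
  apply Rle_trans with (rsum N (fun i => edist N p p' * Rabs (B i j))).
  - apply rsum_le. intros i Hi. rewrite Rabs_mult.
    apply Rmult_le_compat_r; [apply Rabs_pos|].
    rewrite (rsum_ext _ _ (fun k => w k * V k i - w' k * V k i)).
    + rewrite rsum_minus, <- Hp, <- Hp' by assumption. apply coord_le_edist, Hi.
    + intros k _. unfold W. destruct (Nat.ltb_spec i N); [ring|lia].
  - rewrite rsum_scal_l, Rmult_comm. apply Rmult_le_compat_r.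
    + apply edist_nonneg.
    + apply (rsum_ge_term (S m) (fun j => rsum N (fun i => Rabs (B i j))) j);
        [|lia].
      intros; apply rsum_nonneg; intros; apply Rabs_pos.
Qed.

Definition coords_modulus (X : Metric_Space) (m : nat)
    (t : Base X -> nat -> R) (e delta : R) : Prop :=
  forall x y j, (j <= m)%nat -> dist X x y < delta -> Rabs (t x j - t y j) <= e.

Lemma coords_uniformly_continuous (X : Metric_Space) N m V
    (f t : Base X -> nat -> R) :
  affinely_independent N m V -> uniformly_continuous_into X N f ->
  (forall x, rsum (S m) (t x) = 1) ->
  (forall x i, (i < N)%nat -> f x i = rsum (S m) (fun j => t x j * V j i)) ->
  forall e, 0 < e -> exists delta, 0 < delta /\ coords_modulus X m t e delta.
Proof.
  intros hV hf Ht1 Htf e He.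
  destruct (barycentric_coords_lipschitz N m V hV) as [C [HC HCbound]].
  destruct (hf (e / (C + 1))) as [delta [Hd Hdelta]].
  { apply Rdiv_lt_0_compat; lra. }
  exists delta; split; [exact Hd|]. intros x y j Hj Hxy.
  eapply Rle_trans; [apply (HCbound (t x) (t y) (f x) (f y)); auto|].
  specialize (Hdelta x y Hxy).
  apply Rle_trans with ((C + 1) * (e / (C + 1))); [|right; field; lra].
  pose proof (edist_nonneg N (f x) (f y)).
  apply Rmult_le_compat; lra.
Qed.

(** * Normalized weights *)

Lemma weights_total_lower m (t h : nat -> R) e :
  rsum (S m) t = 1 -> (forall j, (j <= m)%nat -> t j - e <= h j) ->
  1 - INR (S m) * e <= rsum (S m) h.
Proof.
  intros Ht Hh. rewrite <- Ht, <- rsum_const, <- rsum_minus.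
  apply rsum_le. intros j Hj. apply Hh. lia.
Qed.

Lemma normalized_weights_close m (t h : nat -> R) e :
  rsum (S m) t = 1 ->
  (forall j, (j <= m)%nat -> 0 <= h j /\ t j - e <= h j <= t j) ->
  INR (S m) * e <= / 2 ->
  forall j, (j <= m)%nat ->
    Rabs (h j / rsum (S m) h - t j) <= 2 * INR (S m) * e.
Proof.
  intros Ht Hh Hme j Hj.
  set (total := rsum (S m) h).
  assert (Htotal_le : total <= 1)
    by (rewrite <- Ht; apply rsum_le; intros; apply Hh; lia).
  assert (Htotal_ge : 1 - INR (S m) * e <= total)
    by (apply (weights_total_lower m t); [exact Ht|intros; apply Hh; assumption]).
  assert (Hhj : h j <= total)
    by (apply (rsum_ge_term (S m) h j); [intros; apply Hh; lia|lia]).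
  destruct (Hh j Hj) as [Hh0 [Hlow Hup]].
  assert (Hm : 1 <= INR (S m)) by (rewrite S_INR; pose proof (pos_INR m); lra).
  set (q := / total).
  assert (Hq : q * total = 1) by (unfold q; field; lra).
  assert (Hq1 : 1 <= q)
    by (unfold q; rewrite <- Rinv_1; apply Rinv_le_contravar; lra).
  assert (Hq2 : q <= 2)
    by (unfold q; rewrite <- (Rinv_inv 2); apply Rinv_le_contravar; lra).
  assert (Hqm : q - 1 <= 2 * (INR (S m) * e)).
  { replace (q - 1) with (q * (1 - total))
      by (rewrite Rmult_minus_distr_l, Hq; ring).
    apply Rmult_le_compat; lra. }
  assert (0 <= h j * (q - 1) <= q - 1) by (split; nra).
  unfold Rdiv. fold q.
  replace (h j * q - t j) with (h j * (q - 1) + (h j - t j)) by ring.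
  apply Rabs_le. nra.
Qed.

Lemma normalized_in_realization N m V F (t h : nat -> R) (s : list nat) :
  In s F -> (forall j, (j <= m)%nat -> t j <> 0 -> In j s) ->
  (forall j, (j <= m)%nat -> 0 <= h j <= t j) -> 0 < rsum (S m) h ->
  in_realization N m V F (bary_point N m V (fun j => h j / rsum (S m) h)).
Proof.
  intros Hs Hsupp Hh Hpos. split.
  { intros i Hi. unfold bary_point. destruct (Nat.ltb_spec i N); [lia|reflexivity]. }
  exists (fun j => h j / rsum (S m) h). split; [|split; [|split]].
  - intros j Hj. unfold Rdiv. apply Rmult_le_pos; [apply Hh, Hj|].
    left; apply Rinv_0_lt_compat, Hpos.
  - unfold Rdiv. rewrite rsum_scal_r. field. lra.
  - intros i Hi. unfold bary_point.
    destruct (Nat.ltb_spec i N); [reflexivity|lia].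
  - exists s. split; [exact Hs|]. intros j Hj Hne. apply Hsupp; [exact Hj|].
    intros Htj. apply Hne.
    assert (Hhj : h j = 0) by (pose proof (Hh j Hj); lra).
    rewrite Hhj. unfold Rdiv. ring.
Qed.

Definition vertex_norm (N m : nat) (V : nat -> nat -> R) : R :=
  rsum N (fun i => rsum (S m) (fun j => Rabs (V j i))).

Lemma bary_point_close N m V (w w' p : nat -> R) eta :
  (forall i, (i < N)%nat -> p i = rsum (S m) (fun j => w' j * V j i)) ->
  (forall j, (j <= m)%nat -> Rabs (w j - w' j) <= eta) ->
  edist N (bary_point N m V w) p <= eta * vertex_norm N m V.
Proof.
  intros Hp Hw. eapply Rle_trans; [apply edist_le_l1|].
  unfold vertex_norm. rewrite <- rsum_scal_l. apply rsum_le. intros i Hi.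
  unfold bary_point. destruct (Nat.ltb_spec i N); [|lia].
  rewrite (Hp i Hi), <- rsum_minus, <- rsum_scal_l.
  eapply Rle_trans; [apply rsum_abs|]. apply rsum_le. intros j Hj.
  replace (w j * V j i - w' j * V j i) with ((w j - w' j) * V j i) by ring.
  rewrite Rabs_mult. apply Rmult_le_compat_r; [apply Rabs_pos|apply Hw; lia].
Qed.

Lemma normalized_weight_lipschitz (X : Metric_Space) m
    (h : nat -> Base X -> R) beta j :
  (forall k, (k <= m)%nat -> lipschitz_real X (h k)) ->
  (j <= m)%nat -> (forall x, Rabs (h j x) <= 1) -> 0 < beta ->
  (forall x, beta <= rsum (S m) (fun k => h k x)) ->
  lipschitz_real X (fun x => h j x / rsum (S m) (fun k => h k x)).
Proof.
  intros Hlip Hj Hbound Hbeta Htotal.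
  apply lipschitz_real_mult with (A := 1) (B := / beta).
  - apply Hlip, Hj.
  - apply lipschitz_real_inv with beta; [|assumption|assumption].
    apply lipschitz_real_rsum. intros k Hk. apply Hlip. lia.
  - exact Hbound.
  - intros x. pose proof (Htotal x).
    rewrite Rabs_right by (left; apply Rinv_0_lt_compat; lra).
    apply Rinv_le_contravar; assumption.
Qed.

Lemma bary_point_lipschitz (X : Metric_Space) N m V (w : Base X -> nat -> R) :
  (forall j, (j <= m)%nat -> lipschitz_real X (fun x => w x j)) ->
  lipschitz_into X N (fun x => bary_point N m V (w x)).
Proof.
  intros Hw. apply lipschitz_of_coords. intros i Hi.
  apply lipschitz_real_ext with (fun x => rsum (S m) (fun j => V j i * w x j)).
  - apply (lipschitz_real_rsum X (S m) (fun j x => V j i * w x j)).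
    intros j Hj. apply lipschitz_real_scal, Hw. lia.
  - intros x. unfold bary_point. destruct (Nat.ltb_spec i N); [|lia].
    apply rsum_ext. intros; ring.
Qed.

(** * The approximating sequence *)

Section Approximation.
Variables (X : Metric_Space) (N m : nat) (V : nat -> nat -> R)
  (F : list (list nat)) (f t : Base X -> nat -> R).

Hypothesis t_nonneg : forall x j, (j <= m)%nat -> 0 <= t x j.
Hypothesis t_total : forall x, rsum (S m) (t x) = 1.
Hypothesis t_coords :
  forall x i, (i < N)%nat -> f x i = rsum (S m) (fun j => t x j * V j i).
Hypothesis t_face :
  forall x, exists s, In s F /\ forall j, (j <= m)%nat -> t x j <> 0 -> In j s.
Hypothesis t_unif :
  forall e, 0 < e -> exists delta, 0 < delta /\ coords_modulus X m t e delta.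

(* A modulus d0 of the coordinates for the error 1 / (2 (m + 1)); with the
   Lipschitz constants (k + 1) / d0 it keeps every total weight >= 1/2. *)
Variable d0 : R.
Hypothesis d0_pos : 0 < d0.
Hypothesis d0_modulus : coords_modulus X m t (/ (2 * INR (S m))) d0.

Definition weight (k j : nat) (x : Base X) : R :=
  infconv X (fun y => t y j) ((INR k + 1) / d0) x.

Definition total_weight (k : nat) (x : Base X) : R :=
  rsum (S m) (fun j => weight k j x).

Definition approx (k : nat) (x : Base X) : nat -> R :=
  bary_point N m V (fun j => weight k j x / total_weight k x).

Lemma t_le_one x j : (j <= m)%nat -> t x j <= 1.
Proof.
  intros Hj. rewrite <- (t_total x).
  apply (rsum_ge_term (S m) (t x) j); [intros; apply t_nonneg; lia|lia].
Qed.

Lemma weight_bounds k j x : (j <= m)%nat -> 0 <= weight k j x <= t x j.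
Proof.
  intros Hj. split; [apply infconv_nonneg|].
  eapply Rle_trans; [apply infconv_le_self|].
  rewrite Rabs_right; [lra|apply Rle_ge, t_nonneg, Hj].
Qed.

Lemma weight_close k e d :
  0 < d -> coords_modulus X m t e d -> d0 <= (INR k + 1) * d ->
  forall x j, (j <= m)%nat -> t x j - e <= weight k j x.
Proof.
  intros Hd Hmod Hk x j Hj. apply (infconv_close X (fun y => t y j) _ d);
    [| |intros y z; apply Hmod, Hj|].
  - intros y; split; [apply t_nonneg|apply t_le_one]; exact Hj.
  - exact Hd.
  - replace ((INR k + 1) / d0 * d) with ((INR k + 1) * d / d0) by (field; lra).
    apply (Rmult_le_reg_r d0); [exact d0_pos|].
    unfold Rdiv. rewrite Rmult_assoc, Rinv_l, Rmult_1_r by lra. lra.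
Qed.

Lemma total_weight_ge_half k x : / 2 <= total_weight k x.
Proof.
  assert (Hm : 0 < INR (S m)) by (apply lt_0_INR; lia).
  apply Rle_trans with (1 - INR (S m) * / (2 * INR (S m))).
  { right. field. lra. }
  apply (weights_total_lower m (t x)); [apply t_total|].
  intros j Hj. apply (weight_close k _ d0); [exact d0_pos|exact d0_modulus| |exact Hj].
  pose proof (pos_INR k). nra.
Qed.

Lemma approx_in_realization k x : in_realization N m V F (approx k x).
Proof.
  destruct (t_face x) as [s [Hs Hsupp]].
  apply (normalized_in_realization N m V F (t x) (fun j => weight k j x) s Hs Hsupp).
  - intros j Hj. apply weight_bounds, Hj.
  - pose proof (total_weight_ge_half k x). unfold total_weight in *. lra.
Qed.

Lemma approx_lipschitz k : lipschitz_into X N (approx k).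
Proof.
  apply bary_point_lipschitz. intros j Hj.
  apply (normalized_weight_lipschitz X m (weight k) (/ 2) j).
  - intros i Hi. apply infconv_lipschitz.
  - exact Hj.
  - intros x. pose proof (weight_bounds k j x Hj). pose proof (t_le_one x j Hj).
    rewrite Rabs_right; lra.
  - lra.
  - apply total_weight_ge_half.
Qed.

Lemma approx_converges : uniform_limit X N approx f.
Proof.
  intros eps Heps.
  set (M := vertex_norm N m V).
  assert (HM : 0 <= M)
    by (apply rsum_nonneg; intros; apply rsum_nonneg; intros; apply Rabs_pos).
  assert (Hm : 0 < INR (S m)) by (apply lt_0_INR; lia).
  set (eta := eps / (M + 1)).
  assert (Heta : 0 < eta) by (apply Rdiv_lt_0_compat; lra).
  (* The weight error e keeps the normalized error 2 (m + 1) e below eta. *)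
  set (e := Rmin (/ (2 * INR (S m))) (eta / (2 * INR (S m)))).
  assert (He : 0 < e)
    by (apply Rmin_pos; [apply Rinv_0_lt_compat|apply Rdiv_lt_0_compat]; lra).
  assert (He_half : INR (S m) * e <= / 2).
  { apply Rle_trans with (INR (S m) * / (2 * INR (S m))).
    - apply Rmult_le_compat_l; [lra|apply Rmin_l].
    - right. field. lra. }
  assert (He_eta : 2 * INR (S m) * e <= eta).
  { apply Rle_trans with (2 * INR (S m) * (eta / (2 * INR (S m)))).
    - apply Rmult_le_compat_l; [lra|apply Rmin_r].
    - right. field. lra. }
  destruct (t_unif e He) as [d [Hd Hmod]].
  destruct (INR_archimed d d0 Hd) as [k0 Hk0].
  exists k0. intros k Hk x.
  assert (Hstage : d0 <= (INR k + 1) * d).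
  { pose proof (le_INR _ _ Hk). nra. }
  apply Rle_lt_trans with (eta * M).
  - apply (bary_point_close N m V _ (t x)); [apply t_coords|]. intros j Hj.
    eapply Rle_trans; [|exact He_eta].
    apply (normalized_weights_close m (t x) (fun i => weight k i x) e);
      [apply t_total| |exact He_half|exact Hj].
    intros i Hi. pose proof (weight_bounds k i x Hi).
    pose proof (weight_close k e d Hd Hmod Hstage x i Hi). lra.
  - apply Rlt_le_trans with (eta * (M + 1)); [apply Rmult_lt_compat_l; lra|].
    right. unfold eta. field. lra.
Qed.

End Approximation.

Theorem corollary3p7 (X : Metric_Space) (N m : nat) (V : nat -> nat -> R)
    (F : list (list nat))
    (hV : affinely_independent N m V) (hF : simplicial_complex m F)
    (f : Base X -> nat -> R)
    (hfK : forall x, in_realization N m V F (f x))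
    (hf : uniformly_continuous_into X N f) :
  exists g : nat -> Base X -> nat -> R,
    (forall k x, in_realization N m V F (g k x)) /\
    (forall k, lipschitz_into X N (g k)) /\
    uniform_limit X N g f.
Proof.
  destruct (choice _ (fun x => proj2 (hfK x))) as [t Ht].
  assert (t_nonneg : forall x j, (j <= m)%nat -> 0 <= t x j)
    by (intros x; apply (Ht x)).
  assert (t_total : forall x, rsum (S m) (t x) = 1) by (intros x; apply (Ht x)).
  assert (t_coords : forall x i, (i < N)%nat ->
            f x i = rsum (S m) (fun j => t x j * V j i))
    by (intros x; apply (Ht x)).
  assert (t_face : forall x, exists s, In s F /\
            forall j, (j <= m)%nat -> t x j <> 0 -> In j s)
    by (intros x; apply (Ht x)).
  pose proof (coords_uniformly_continuous X N m V f t hV hf t_total t_coords)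
    as t_unif.
  destruct (t_unif (/ (2 * INR (S m)))) as [d0 [Hd0 Hmod0]].
  { apply Rinv_0_lt_compat. pose proof (lt_0_INR (S m) ltac:(lia)). lra. }
  exists (approx X N m V t d0). split; [|split].
  - intros k x. apply approx_in_realization; assumption.
  - intros k. apply approx_lipschitz; assumption.
  - apply approx_converges; assumption.
Qed.
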